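(* Consider a one-site PTM cascade with $n=1$ layer and positive $\overline{F},\overline{S}$. Let $\xi=\gamma\overline{F}/\delta$, $p_1(y)=\lambda y(\xi-y)$, $p_2(y)=(\delta+\gamma)y^2-\gamma(1/\delta+\overline{F}+\xi+\overline{S})y+\gamma\xi\overline{S}$, and $g=p_1/p_2$. Then $p_2$ has two positive real roots $\alpha_1<\alpha_2$ with $\alpha_1<\xi<\alpha_2$; $g$ is continuous and increasing on each of the intervals $(-\infty,\alpha_1)$, $(\alpha_1,\alpha_2)$, $(\alpha_2,\infty)$; $g(0)=0$ and $g(y)\to+\infty$ as $y\to\alpha_1^-$. Moreover, for every positive $\overline{E}$, at the BMSS one has $E=g(Y^0)$ and $Y^0\in(0,\alpha_1)$.
   Context: For $n=1$ the one-site PTM cascade has species $E,S^0,S^1,F,Y^0,Y^1$ with reactions $E+S^0\rightleftharpoons Y^0\to E+S^1$ (rate constants $a^0,b^0,c^0$) and $F+S^1\rightleftharpoons Y^1\to F+S^0$ (rate constants $a^1,b^1,c^1$), all positive, mass-action kinetics. Put $\delta=a^1/(b^1+c^1)$, $\gamma=(c^1/c^0)\delta$, $\lambda=\frac{b^0+c^0}{a^0}\gamma$. A steady state for total amounts $\overline{E},\overline{F},\overline{S}$ is a real solution of $Y^0=\gamma FS^1$, $Y^1=\delta FS^1$, $\lambda FS^1=S^0E$, $\overline{F}=F+Y^1$, $\overline{E}=E+Y^0$, $\overline{S}=S^0+S^1+Y^0+Y^1$. A BMSS is a steady state with positive total amounts and all concentrations nonnegative. Increasing means strictly increasing. *)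

From Stdlib Require Import Reals Lra.
Open Scope R_scope.

Definition ptm_delta (a1 b1 c1 : R) : R := a1 / (b1 + c1).
Definition ptm_gamma (c0 a1 b1 c1 : R) : R := (c1 / c0) * ptm_delta a1 b1 c1.
Definition ptm_lambda (a0 b0 c0 a1 b1 c1 : R) : R :=
  (b0 + c0) / a0 * ptm_gamma c0 a1 b1 c1.

Definition steady_state (a0 b0 c0 a1 b1 c1 : R) (Etot Ftot Stot : R)
  (E S0 S1 F Y0 Y1 : R) : Prop :=
  let d := ptm_delta a1 b1 c1 in
  let g := ptm_gamma c0 a1 b1 c1 in
  let l := ptm_lambda a0 b0 c0 a1 b1 c1 in
  Y0 = g * F * S1 /\ Y1 = d * F * S1 /\ l * F * S1 = S0 * E /\
  Ftot = F + Y1 /\ Etot = E + Y0 /\ Stot = S0 + S1 + Y0 + Y1.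

Definition BMSS (a0 b0 c0 a1 b1 c1 : R) (Etot Ftot Stot : R)
  (E S0 S1 F Y0 Y1 : R) : Prop :=
  steady_state a0 b0 c0 a1 b1 c1 Etot Ftot Stot E S0 S1 F Y0 Y1 /\
  0 < Etot /\ 0 < Ftot /\ 0 < Stot /\
  0 <= E /\ 0 <= S0 /\ 0 <= S1 /\ 0 <= F /\ 0 <= Y0 /\ 0 <= Y1.

(* Strictly increasing on the open interval (a,b); use None for infinite ends. *)
Definition in_interval (lo hi : option R) (x : R) : Prop :=
  (match lo with Some a => a < x | None => True end) /\
  (match hi with Some b => x < b | None => True end).

Definition strictly_increasing_on (f : R -> R) (lo hi : option R) : Prop :=
  forall x y, in_interval lo hi x -> in_interval lo hi y -> x < y -> f x < f y.

Definition continuous_on (f : R -> R) (lo hi : option R) : Prop :=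
  forall x, in_interval lo hi x -> continuity_pt f x.

(* Write p2 y = A y^2 - B y + C.  It is an upward parabola with p2 0 = C > 0 and,
   since delta xi = gamma Ftot, p2 xi = - gamma xi / delta < 0; so its roots are
   positive and straddle xi.  The derivative of g = p1 / p2 is
   lambda Q / p2^2 with Q y = (B - xi A) y^2 - 2 C y + xi C, and Q has negative
   discriminant precisely because p2 xi < 0: g increases wherever p2 does not vanish.
   As y -> alpha1^-, p1 y -> p1 alpha1 > 0 and p2 y -> 0^+, so g blows up.
   At a BMSS, eliminating F and S1 gives p2 Y0 = gamma (xi - Y0) S0 >= 0 and
   E p2 Y0 = p1 Y0 > 0 with 0 < Y0 < xi < alpha2; hence p2 Y0 > 0 and Y0 < alpha1. *)

From Stdlib Require Import Reals Lra Psatz.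
From Coquelicot Require Import Coquelicot.
Open Scope R_scope.

Definition quad (A B C y : R) : R := A * y ^ 2 - B * y + C.
Definition ratfun (lam xi A B C y : R) : R := lam * y * (xi - y) / quad A B C y.

Definition option_lower_Rbar (lo : option R) : Rbar :=
  match lo with Some a => Finite a | None => m_infty end.
Definition option_upper_Rbar (hi : option R) : Rbar :=
  match hi with Some b => Finite b | None => p_infty end.

Lemma in_interval_Rbar (lo hi : option R) (y : R) :
  in_interval lo hi y <-> Rbar_lt (option_lower_Rbar lo) y /\ Rbar_lt y (option_upper_Rbar hi).
Proof. unfold in_interval; destruct lo, hi; simpl; tauto. Qed.

Section Factored.

Variables A B C a1 a2 : R.
Hypothesis hA : 0 < A.
Hypothesis h12 : a1 < a2.
Hypothesis hfac : forall y, quad A B C y = A * ((y - a1) * (y - a2)).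

Lemma quad_eq0_iff y : quad A B C y = 0 <-> y = a1 \/ y = a2.
Proof.
rewrite hfac. split.
- intro h. apply Rmult_integral in h as [h|h]; [lra|].
  apply Rmult_integral in h as [h|h]; [left|right]; lra.
- intros [h|h]; subst y; ring.
Qed.

Lemma quad_pos_iff y : 0 < quad A B C y <-> y < a1 \/ a2 < y.
Proof.
rewrite hfac. split.
- intro h. destruct (Rlt_or_le y a1) as [h1|h1]; [left; exact h1|right].
  destruct (Rlt_or_le a2 y) as [h2|h2]; [exact h2|].
  assert (A * ((y - a1) * (a2 - y)) >= 0) by (apply Rle_ge, Rmult_le_pos; [lra|apply Rmult_le_pos; lra]).
  nra.
- intros [h|h]; apply Rmult_lt_0_compat; nra.
Qed.

End Factored.

Section Quadratic.

Variables A B C xi : R.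
Hypothesis hA : 0 < A.
Hypothesis hC : 0 < C.
Hypothesis hxi : 0 < xi.
Hypothesis hneg : quad A B C xi < 0.

Lemma quad_roots_straddle : exists a1 a2, 0 < a1 /\ a1 < xi /\ xi < a2 /\
  forall y, quad A B C y = A * ((y - a1) * (y - a2)).
Proof.
unfold quad in *.
set (D := B ^ 2 - 4 * A * C).
assert (hD : 0 < D).
{ assert (4 * A * (A * xi ^ 2 - B * xi + C) = (2 * A * xi - B) ^ 2 - D) by (unfold D; ring).
  assert (0 <= (2 * A * xi - B) ^ 2) by apply pow2_ge_0.
  assert (4 * A * (A * xi ^ 2 - B * xi + C) < 0) by nra.
  lra. }
set (s := sqrt D).
assert (hs : 0 < s) by (apply sqrt_lt_R0; exact hD).
assert (hss : s * s = D) by (apply sqrt_sqrt; lra).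
assert (hfac : forall y, A * y ^ 2 - B * y + C = A * ((y - (B - s) / (2 * A)) * (y - (B + s) / (2 * A)))).
{ intro y. apply (Rmult_eq_reg_l (4 * A)); [|lra].
  replace (4 * A * (A * ((y - (B - s) / (2 * A)) * (y - (B + s) / (2 * A)))))
    with ((2 * A * y - B) ^ 2 - s * s) by (field; lra).
  rewrite hss. unfold D. ring. }
set (a1 := (B - s) / (2 * A)) in hfac. set (a2 := (B + s) / (2 * A)) in hfac.
assert (h12 : a1 < a2).
{ apply Rmult_lt_compat_r; [apply Rinv_0_lt_compat|]; lra. }
assert (hbetween : a1 < xi < a2).
{ rewrite hfac in hneg. assert ((xi - a1) * (xi - a2) < 0) by nra. nra. }
assert (h0 : 0 < a1 * a2) by (specialize (hfac 0); nra).
exists a1, a2. repeat split; try nra. exact hfac.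
Qed.

Lemma ratfun_derivative_numerator_pos y : 0 < (B - xi * A) * y ^ 2 - 2 * C * y + xi * C.
Proof.
unfold quad in hneg.
set (K := B - xi * A).
assert (hKxi : C < K * xi) by (unfold K; nra).
assert (hK : 0 < K) by nra.
assert (hsq : K * (K * y ^ 2 - 2 * C * y + xi * C) = (K * y - C) ^ 2 + C * (K * xi - C)) by ring.
assert (0 <= (K * y - C) ^ 2) by apply pow2_ge_0.
nra.
Qed.

Variable lam : R.
Hypothesis hlam : 0 < lam.

Lemma ratfun_derive y : quad A B C y <> 0 ->
  is_derive (ratfun lam xi A B C) y
    (lam * ((B - xi * A) * y ^ 2 - 2 * C * y + xi * C) / quad A B C y ^ 2).
Proof.
intro hq. unfold ratfun, quad in *.
auto_derive; [exact hq|]. field. exact hq.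
Qed.

Lemma ratfun_continuous y : quad A B C y <> 0 -> continuity_pt (ratfun lam xi A B C) y.
Proof.
intro hq. apply continuity_pt_filterlim.
apply (ex_derive_continuous (K := R_AbsRing) (V := R_NormedModule)).
eexists. exact (ratfun_derive y hq).
Qed.

Lemma ratfun_increasing (lo hi : Rbar) :
  (forall y : R, Rbar_lt lo y -> Rbar_lt y hi -> quad A B C y <> 0) ->
  forall x y : R, Rbar_lt lo x -> x < y -> Rbar_lt y hi ->
  ratfun lam xi A B C x < ratfun lam xi A B C y.
Proof.
intro hq. apply incr_function with
  (df := fun y => lam * ((B - xi * A) * y ^ 2 - 2 * C * y + xi * C) / quad A B C y ^ 2).
- intros y hlo hhi. exact (ratfun_derive y (hq y hlo hhi)).
- intros y hlo hhi. apply Rdiv_lt_0_compat.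
  + apply Rmult_lt_0_compat; [exact hlam | apply ratfun_derivative_numerator_pos].
  + apply pow2_gt_0, hq; assumption.
Qed.

Lemma ratfun_continuous_increasing_on (lo hi : option R) :
  (forall y, in_interval lo hi y -> quad A B C y <> 0) ->
  continuous_on (ratfun lam xi A B C) lo hi /\ strictly_increasing_on (ratfun lam xi A B C) lo hi.
Proof.
intro hq. split.
- intros y hy. exact (ratfun_continuous y (hq y hy)).
- intros x y hx hy hxy.
  apply in_interval_Rbar in hx as [hxlo _]. apply in_interval_Rbar in hy as [_ hyhi].
  apply (ratfun_increasing (option_lower_Rbar lo) (option_upper_Rbar hi)); try assumption.
  intros z hlo hhi. apply hq, in_interval_Rbar. split; assumption.
Qed.

End Quadratic.

Lemma at_left_div_pinfty (f h : R -> R) (a : R) :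
  continuous f a -> 0 < f a -> continuous h a -> h a = 0 ->
  at_left a (fun y => 0 < h y) ->
  forall M, exists eps, 0 < eps /\ forall y, a - eps < y < a -> M < f y / h y.
Proof.
intros cf hfa ch ha hpos M.
assert (Hf : filterlim f (at_left a) (locally (f a))).
{ eapply filterlim_filter_le_1; [|exact cf]. intros P HP. apply filter_imp with (2 := HP). auto. }
assert (Hh : filterlim h (at_left a) (at_right 0)).
{ intros P [d Hd]. unfold filtermap.
  apply (filter_imp (fun y => 0 < h y /\ ball 0 d (h y))).
  { intros y [hy hb]. exact (Hd _ hb hy). }
  apply filter_and; [exact hpos|].
  assert (Hb : locally a (fun y => ball (h a) d (h y))) by (apply ch; apply locally_ball).
  rewrite ha in Hb. unfold at_left, within. apply filter_imp with (2 := Hb). auto. }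
assert (Hdiv : filterlim (fun y => f y / h y) (at_left a) (Rbar_locally p_infty)).
{ apply (filterlim_comp_2 (H := Rbar_locally p_infty) f (fun y => / h y) Rmult Hf).
  - exact (filterlim_comp _ _ _ _ _ _ _ _ Hh filterlim_Rinv_0_right).
  - apply (filterlim_Rbar_mult (f a) p_infty p_infty).
    apply is_Rbar_mult_sym, is_Rbar_mult_p_infty_pos. exact hfa. }
destruct (Hdiv (fun u => M < u) (ex_intro _ M (fun u hu => hu))) as [eps Heps].
exists eps. split; [apply cond_pos|]. intros y hy. apply Heps; [|lra].
apply Rabs_lt_between'. lra.
Qed.

Lemma ratfun_unbounded_left_of_root (lam xi A B C a : R) :
  0 < lam -> 0 < a < xi -> quad A B C a = 0 -> (forall y, y < a -> 0 < quad A B C y) ->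
  forall M, exists eps, 0 < eps /\ forall y, a - eps < y < a -> M < ratfun lam xi A B C y.
Proof.
intros hlam ha hroot hleft.
apply (at_left_div_pinfty (fun y => lam * y * (xi - y)) (quad A B C)).
- apply (ex_derive_continuous (K := R_AbsRing) (V := R_NormedModule)). auto_derive. exact I.
- apply Rmult_lt_0_compat; [apply Rmult_lt_0_compat|]; lra.
- apply (ex_derive_continuous (K := R_AbsRing) (V := R_NormedModule)). unfold quad. auto_derive. exact I.
- exact hroot.
- exists (mkposreal 1 Rlt_0_1). intros y _ hy. exact (hleft y hy).
Qed.

Lemma ptm_constants_pos (a0 b0 c0 a1 b1 c1 : R) :
  0 < a0 -> 0 < b0 -> 0 < c0 -> 0 < a1 -> 0 < b1 -> 0 < c1 ->
  0 < ptm_delta a1 b1 c1 /\ 0 < ptm_gamma c0 a1 b1 c1 /\ 0 < ptm_lambda a0 b0 c0 a1 b1 c1.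
Proof.
intros. unfold ptm_lambda, ptm_gamma, ptm_delta.
assert (0 < a1 / (b1 + c1)) by (apply Rdiv_lt_0_compat; lra).
assert (0 < c1 / c0 * (a1 / (b1 + c1))) by (apply Rmult_lt_0_compat; [apply Rdiv_lt_0_compat|]; lra).
split; [|split]; try assumption.
apply Rmult_lt_0_compat; [apply Rdiv_lt_0_compat|]; lra.
Qed.

Lemma quad_at_xi (d gm F S : R) : d <> 0 ->
  quad (d + gm) (gm * (/ d + F + gm * F / d + S)) (gm * (gm * F / d) * S) (gm * F / d)
  = - (gm * (gm * F / d) / d).
Proof. intro hd. unfold quad. field. exact hd. Qed.

Lemma steady_state_quad (d gm l Ft St Et E S0 S1 F Y0 Y1 : R) :
  0 < d -> 0 < gm -> 0 < l -> 0 < Ft -> 0 < St -> 0 < Et ->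
  Y0 = gm * F * S1 -> Y1 = d * F * S1 -> l * F * S1 = S0 * E ->
  Ft = F + Y1 -> Et = E + Y0 -> St = S0 + S1 + Y0 + Y1 ->
  0 <= E -> 0 <= S0 -> 0 <= S1 -> 0 <= F ->
  let xi := gm * Ft / d in
  0 < Y0 /\ Y0 < xi /\
  quad (d + gm) (gm * (/ d + Ft + xi + St)) (gm * xi * St) Y0 = gm * (xi - Y0) * S0 /\
  E * quad (d + gm) (gm * (/ d + Ft + xi + St)) (gm * xi * St) Y0 = l * Y0 * (xi - Y0).
Proof.
intros hd hg hl hFt hSt hEt eY0 eY1 eS1 eFt eEt eSt hE hS0 hS1 hF xi.
subst xi Y0 Y1 Ft St Et.
assert (hF' : 0 < F) by (destruct hF as [h|h]; [exact h|subst F; lra]).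
assert (hS1' : 0 < S1).
{ destruct hS1 as [h|h]; [exact h|subst S1].
  assert (S0 * E = 0) by (rewrite <- eS1; ring). nra. }
assert (hxiY0 : gm * (F + d * F * S1) / d - gm * F * S1 = gm * F / d) by (field; lra).
rewrite hxiY0.
assert (hquad : quad (d + gm) (gm * (/ d + (F + d * F * S1) + gm * (F + d * F * S1) / d
    + (S0 + S1 + gm * F * S1 + d * F * S1))) (gm * (gm * (F + d * F * S1) / d)
    * (S0 + S1 + gm * F * S1 + d * F * S1)) (gm * F * S1) = gm * (gm * F / d) * S0)
  by (unfold quad; field; lra).
assert (0 < gm * F / d) by (apply Rdiv_lt_0_compat; nra).
assert (0 < gm * F * S1) by (apply Rmult_lt_0_compat; nra).
split; [|split; [|split]].
- lra.
- lra.
- exact hquad.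
- rewrite hquad. replace (E * (gm * (gm * F / d) * S0)) with (gm * (gm * F / d) * (S0 * E)) by ring.
  rewrite <- eS1. ring.
Qed.

Lemma ratfun_at_nonneg_denominator (lam xi A B C a1 a2 E y : R) : 0 < lam ->
  (forall z, 0 < quad A B C z <-> z < a1 \/ a2 < z) ->
  0 < y -> y < xi -> xi < a2 -> 0 <= quad A B C y -> E * quad A B C y = lam * y * (xi - y) ->
  E = ratfun lam xi A B C y /\ y < a1.
Proof.
intros hlam hpos hy hyxi hxi2 hq hE.
assert (hp1 : 0 < lam * y * (xi - y)) by (apply Rmult_lt_0_compat; [apply Rmult_lt_0_compat|]; lra).
assert (hq' : 0 < quad A B C y).
{ destruct hq as [h|h]; [exact h|]. rewrite <- h in hE. lra. }
split.
- unfold ratfun. rewrite <- hE. field. lra.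
- apply hpos in hq'. lra.
Qed.

Theorem mainTheorem4 (a0 b0 c0 a1 b1 c1 Ftot Stot : R)
  (ha0 : 0 < a0) (hb0 : 0 < b0) (hc0 : 0 < c0)
  (ha1 : 0 < a1) (hb1 : 0 < b1) (hc1 : 0 < c1)
  (hF : 0 < Ftot) (hS : 0 < Stot) :
  let delta := ptm_delta a1 b1 c1 in
  let gamma := ptm_gamma c0 a1 b1 c1 in
  let lambda := ptm_lambda a0 b0 c0 a1 b1 c1 in
  let xi := gamma * Ftot / delta in
  let p1 := fun y : R => lambda * y * (xi - y) in
  let p2 := fun y : R =>
    (delta + gamma) * y ^ 2 - gamma * (/ delta + Ftot + xi + Stot) * y
    + gamma * xi * Stot in
  let g := fun y : R => p1 y / p2 y in
  exists alpha1 alpha2 : R,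
    (0 < alpha1 /\ alpha1 < xi /\ xi < alpha2 /\
     forall y, p2 y = 0 <-> (y = alpha1 \/ y = alpha2)) /\
    (continuous_on g None (Some alpha1) /\ strictly_increasing_on g None (Some alpha1)) /\
    (continuous_on g (Some alpha1) (Some alpha2) /\
     strictly_increasing_on g (Some alpha1) (Some alpha2)) /\
    (continuous_on g (Some alpha2) None /\ strictly_increasing_on g (Some alpha2) None) /\
    g 0 = 0 /\
    (forall M : R, exists eps : R, 0 < eps /\
       forall y, alpha1 - eps < y < alpha1 -> M < g y) /\
    (forall Etot E S0 S1 F Y0 Y1 : R, 0 < Etot ->
       BMSS a0 b0 c0 a1 b1 c1 Etot Ftot Stot E S0 S1 F Y0 Y1 ->
       E = g Y0 /\ 0 < Y0 /\ Y0 < alpha1).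
Proof.
intros delta gamma lambda xi p1 p2 g.
destruct (ptm_constants_pos a0 b0 c0 a1 b1 c1) as (hd & hg & hl); try assumption.
fold delta gamma lambda in hd, hg, hl.
assert (hxi : 0 < xi) by (apply Rdiv_lt_0_compat; nra).
set (A := delta + gamma). set (B := gamma * (/ delta + Ftot + xi + Stot)).
set (C := gamma * xi * Stot).
assert (Ep2 : p2 = quad A B C) by reflexivity.
assert (Eg : g = ratfun lambda xi A B C) by reflexivity.
assert (hA : 0 < A) by (unfold A; lra).
assert (hC : 0 < C) by (apply Rmult_lt_0_compat; nra).
assert (hneg : quad A B C xi < 0).
{ assert (0 < gamma * xi / delta) by (apply Rdiv_lt_0_compat; nra).
  unfold A, B, C, xi in *. rewrite quad_at_xi by lra. lra. }
clearbody g p2. rewrite Eg, Ep2.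
destruct (quad_roots_straddle A B C xi hA hC hxi hneg) as (al1 & al2 & h1 & h1xi & hxi2 & hfac).
assert (h12 : al1 < al2) by lra.
pose proof (quad_eq0_iff A B C al1 al2 hA h12 hfac) as hroot.
pose proof (quad_pos_iff A B C al1 al2 hA h12 hfac) as hpos.
assert (hmono : forall lo hi, (forall y, in_interval lo hi y -> y <> al1 /\ y <> al2) ->
  continuous_on (ratfun lambda xi A B C) lo hi /\ strictly_increasing_on (ratfun lambda xi A B C) lo hi).
{ intros lo hi hint. apply (ratfun_continuous_increasing_on A B C xi hC hxi hneg lambda hl).
  intros y hy hy0. apply hroot in hy0. specialize (hint y hy). tauto. }
exists al1, al2.
split; [|split; [|split; [|split; [|split; [|split]]]]].
- split; [lra | split; [lra | split; [lra | exact hroot]]].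
- apply hmono. intros y [_ hy]. simpl in hy. lra.
- apply hmono. intros y [hy1 hy2]. simpl in *. lra.
- apply hmono. intros y [hy _]. simpl in hy. lra.
- unfold ratfun, Rdiv. ring.
- apply (ratfun_unbounded_left_of_root _ _ _ _ _ _ hl); [lra | apply hroot; left; reflexivity |].
  intros y hy. apply hpos. left; exact hy.
- intros Etot E S0 S1 F Y0 Y1 hE [[eY0 [eY1 [eS1 [eFt [eEt eSt]]]]] [_ [_ [_ [hE0 [hS0 [hS1 [hF0 _]]]]]]]].
  destruct (steady_state_quad delta gamma lambda Ftot Stot Etot E S0 S1 F Y0 Y1 hd hg hl hF hS hE
    eY0 eY1 eS1 eFt eEt eSt hE0 hS0 hS1 hF0) as (hY0 & hY0xi & hquadY0 & hEquad).
  fold xi in hY0xi, hquadY0, hEquad. fold A B C in hquadY0, hEquad.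
  assert (hq : 0 <= quad A B C Y0)
    by (rewrite hquadY0; apply Rmult_le_pos; [apply Rmult_le_pos|]; lra).
  destruct (ratfun_at_nonneg_denominator lambda xi A B C al1 al2 E Y0 hl hpos hY0 hY0xi hxi2 hq hEquad)
    as [hEg hlt].
  split; [exact hEg | split; assumption].
Qed.
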